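(* For $k\geq1$, the star $K_{1,k+2}$ has spectator floor $k$ and is minor-minimal among graphs with spectator floor $k$ (no proper minor of it has spectator floor $k$).
   Context: All graphs are finite, have at least one vertex, have no loops, and may have multiple (parallel) edges. A minor of $H$ is any graph obtained from $H$ by a sequence of: deleting an isolated vertex, deleting an edge, contracting an edge that has no edge parallel to it. A unique shortest path is a shortest $u$–$v$ path $P$ such that every $u$–$v$ path with the same number of vertices is identical to $P$, where two paths with different edge sequences are different even if their vertex sequences agree; a single vertex is a unique shortest path. The parade number $\mathrm{usp}(G)$ is the largest number of vertices of a unique shortest path in $G$. The spectator number is $\mathrm{sp}(G)=|V(G)|-\mathrm{usp}(G)$. The spectator floor $\lfloor \mathrm{sp}\rfloor(G)$ is the minimum of $\mathrm{sp}(H)$ over all graphs $H$ of which $G$ is a minor. *)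

From mathcomp Require Import all_boot.
Set Implicit Arguments. Unset Strict Implicit. Unset Printing Implicit Defensive.

(* Finite multigraphs without loops.                                   *)
(* edges are identified by their position in the list, so parallel    *)
(* edges are distinct edges.                                           *)
Record graph := Graph { gnv : nat; gedges : seq (nat * nat) }.

Definition edge_ok (n : nat) (e : nat * nat) : bool :=
  [&& e.1 < n, e.2 < n & e.1 != e.2].

Definition wf (G : graph) : bool := (0 < gnv G) && all (edge_ok (gnv G)) (gedges G).

Definition unord (e : nat * nat) : nat * nat := (minn e.1 e.2, maxn e.1 e.2).

Definition nth_edge (G : graph) (i : nat) : nat * nat := nth (0, 0) (gedges G) i.

Definition iso (G H : graph) : Prop :=
  gnv G = gnv H /\
  exists f : nat -> nat,
    (forall x, x < gnv G -> f x < gnv H) /\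
    {in [pred x | x < gnv G] &, injective f} /\
    perm_eq [seq unord (f e.1, f e.2) | e <- gedges G] [seq unord e | e <- gedges H].

(* renumbering after deleting vertex v *)
Definition shiftv (v w : nat) : nat := if v < w then w.-1 else w.

Definition rm_nth (T : Type) (i : nat) (s : seq T) : seq T := take i s ++ drop i.+1 s.

Inductive minor_step : graph -> graph -> Prop :=
| DelIsolated (G : graph) (v : nat) :
    v < gnv G -> 1 < gnv G ->
    all (fun e : nat * nat => (e.1 != v) && (e.2 != v)) (gedges G) ->
    minor_step G (Graph (gnv G).-1
                        [seq (shiftv v e.1, shiftv v e.2) | e <- gedges G])
| DelEdge (G : graph) (i : nat) :
    i < size (gedges G) ->
    minor_step G (Graph (gnv G) (rm_nth i (gedges G)))
| Contract (G : graph) (i : nat) :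
    i < size (gedges G) ->
    (forall j, j < size (gedges G) -> j != i ->
       unord (nth_edge G j) != unord (nth_edge G i)) ->
    let u := (nth_edge G i).1 in
    let v := (nth_edge G i).2 in
    let ren := fun w => if w == v then u else w in
    minor_step G (Graph (gnv G).-1
                        [seq (shiftv v (ren e.1), shiftv v (ren e.2))
                        | e <- rm_nth i (gedges G)]).

Inductive steps : graph -> graph -> Prop :=
| steps_refl G : steps G G
| steps_cons G1 G2 G3 : minor_step G1 G2 -> steps G2 G3 -> steps G1 G3.

Definition minor (G H : graph) : Prop := exists H', steps H H' /\ iso H' G.

Definition proper_minor (G H : graph) : Prop :=
  exists H1 H', minor_step H H1 /\ steps H1 H' /\ iso H' G.

(* Paths: p = (vertex sequence x_0..x_m, edge index sequence e_1..e_m) *)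
Definition is_path (G : graph) (u v : nat) (p : seq nat * seq nat) : Prop :=
  let vs := p.1 in let es := p.2 in
  size vs = (size es).+1 /\
  uniq vs /\
  all (fun x => x < gnv G) vs /\
  all (fun e => e < size (gedges G)) es /\
  (forall i, i < size es ->
     unord (nth_edge G (nth 0 es i)) = unord (nth 0 vs i, nth 0 vs i.+1)) /\
  nth 0 vs 0 = u /\
  nth 0 vs (size es) = v.

Definition pnv (p : seq nat * seq nat) : nat := size p.1.

Definition is_usp (G : graph) (p : seq nat * seq nat) : Prop :=
  let u := nth 0 p.1 0 in let v := nth 0 p.1 (size p.2) in
  [/\ is_path G u v p,
      (forall q, is_path G u v q -> pnv p <= pnv q) &
      (forall q, is_path G u v q -> pnv q = pnv p -> q = p)].

Definition usp_is (G : graph) (m : nat) : Prop :=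
  (exists p, is_usp G p /\ pnv p = m) /\
  (forall p, is_usp G p -> pnv p <= m).

Definition sp_is (G : graph) (s : nat) : Prop :=
  exists m, usp_is G m /\ s = gnv G - m.

Definition spfloor_is (G : graph) (k : nat) : Prop :=
  (exists H, wf H /\ minor G H /\ sp_is H k) /\
  (forall H s, wf H -> minor G H -> sp_is H s -> k <= s).

Definition star (n : nat) : graph :=
  Graph n.+1 [seq (0, i.+1) | i <- iota 0 n].

From mathcomp Require Import all_boot zify.
Set Implicit Arguments. Unset Strict Implicit. Unset Printing Implicit Defensive.

(* A graph [H] with K_{1,n} as a minor contains a connected set [C] of vertices with [n]
   distinct neighbours outside it.  Let [P] be a shortest path ending at [r] and [d] the
   distance to [r], which drops by one at each step of [P].  Every neighbour on [P] other
   than the two with extreme [d] lies, for [d], strictly between two others; a discrete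
   intermediate value argument along [C] then yields a vertex of [C] at the same distance,
   which is off [P] because [d] is injective on [P].  These vertices and the neighbours off
   [P] are [n - 2] distinct vertices outside [P], so sp(H) >= n - 2, with equality for the
   star and its path leaf-centre-leaf.  One minor operation turns K_{1,k+2} into K_{1,k+1}
   or into K_{1,k+2} minus an edge, a minor of the star with one leaf hung on another
   leaf; both have spectator number k - 1. *)

Lemma uniq_size_bounded (s : seq nat) n : uniq s -> all (fun x => x < n) s -> size s <= n.
Proof.
move=> us /allP sn; rewrite -(size_iota 0 n); apply: uniq_leq_size => // x xs.
by rewrite mem_iota sn.
Qed.

Lemma count_le1 (T : eqType) (P : pred T) (s : seq T) : uniq s ->
  {in s &, forall x y, P x -> P y -> x = y} -> count P s <= 1.
Proof.
move=> us Pinj; rewrite -size_filter.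
have : uniq (filter P s) by rewrite filter_uniq.
have : {subset filter P s <= [pred x | (x \in s) && P x]}.
  by move=> x; rewrite mem_filter andbC.
case: (filter P s) => [|x [|y t]] //= sub /andP[/negP xy _].
have /andP[xs Px] := sub x (mem_head _ _).
have /andP[ys Py] : (y \in s) && P y by apply: sub; rewrite inE mem_head orbT.
by case: xy; rewrite (Pinj _ _ xs ys Px Py) mem_head.
Qed.

Lemma count_interior (s : seq nat) (f : nat -> nat) : uniq s -> {in s &, injective f} ->
  size s <= count (fun y => has (fun a => f a < f y) s && has (fun b => f y < f b) s) s + 2.
Proof.
move=> us f_inj; set interior := (fun y => _ && _).
pose is_min y := ~~ has (fun a => f a < f y) s.
pose is_max y := ~~ has (fun b => f y < f b) s.
have min1 : count is_min s <= 1.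
  apply: count_le1 => // x y xs ys /hasPn xmin /hasPn ymin; apply: f_inj => //.
  by have := xmin y ys; have := ymin x xs; rewrite /= -!leqNgt; lia.
have max1 : count is_max s <= 1.
  apply: count_le1 => // x y xs ys /hasPn xmax /hasPn ymax; apply: f_inj => //.
  by have := xmax y ys; have := ymax x xs; rewrite /= -!leqNgt; lia.
rewrite -(count_predC interior).
have -> : count (predC interior) s = count (predU is_min is_max) s.
  by apply: eq_count => y; rewrite /= negb_and.
have := count_predUI is_min is_max s; lia.
Qed.

Lemma exists_seq_preimage (phi : nat -> nat) (Q : nat -> Prop) (s : seq nat) :
  (forall a, a \in s -> exists2 b, phi b = a & Q b) ->
  exists2 t, map phi t = s & forall b, b \in t -> Q b.
Proof.
elim: s => [|a s IH] sQ; first by exists [::].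
have [b <- Qb] := sQ a (mem_head _ _).
have [c|t <- tQ] := IH; first by move=> cs; apply: sQ; rewrite inE cs orbT.
by exists (b :: t) => // x; rewrite inE => /orP[/eqP ->|/tQ].
Qed.

Lemma mem_rm_nth (T : eqType) i (s : seq T) x : x \in rm_nth i s -> x \in s.
Proof. by rewrite /rm_nth mem_cat => /orP[/mem_take|/mem_drop]. Qed.

Lemma mem_rm_nthP (T : eqType) (x0 : T) i (s : seq T) x : x \in rm_nth i s ->
  exists2 j, j < size s & j != i /\ x = nth x0 s j.
Proof.
rewrite /rm_nth mem_cat => /orP[xs|xs].
  have := index_mem x (take i s); rewrite xs size_take => xi.
  exists (index x (take i s)); first by move: xi; case: ifP; lia.
  split; first by move: xi; case: ifP; lia.
  by rewrite -{1}(nth_index x0 xs) nth_take //; move: xi; case: ifP; lia.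
have := index_mem x (drop i.+1 s); rewrite xs size_drop => xi.
exists (i.+1 + index x (drop i.+1 s)); first lia.
by split; [lia | rewrite -{1}(nth_index x0 xs) nth_drop].
Qed.

Lemma rm_nth_mem (T : eqType) (x0 : T) i (s : seq T) x : uniq s -> i < size s ->
  (x \in rm_nth i s) = (x \in s) && (x != nth x0 s i).
Proof.
move=> us iS; rewrite /rm_nth; set y := nth x0 s i.
have sE : s = take i s ++ y :: drop i.+1 s by rewrite -drop_nth // cat_take_drop.
move: us; rewrite [in RHS]sE {1}sE -cat1s uniq_catCA cat1s /= => /andP[y_notin _].
rewrite !mem_cat inE; case: (eqVneq x y) => [->|_]; last by rewrite andbT.
by rewrite andbF; apply/negbTE; rewrite -mem_cat.
Qed.

Lemma rm_nth_uniq (T : eqType) i (s : seq T) : uniq s -> uniq (rm_nth i s).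
Proof.
apply: subseq_uniq; rewrite -[X in subseq _ X](cat_take_drop i s) cat_subseq //.
by rewrite -addn1 addnC -drop_drop drop_subseq.
Qed.

Lemma rm_nth_size_cat (T : Type) (s : seq T) x : rm_nth (size s) (s ++ [:: x]) = s.
Proof. by rewrite /rm_nth take_size_cat // drop_oversize ?cats0 // size_cat addn1. Qed.

Definition unshiftv (v x : nat) : nat := if v <= x then x.+1 else x.

Lemma shiftvK v x : x != v -> unshiftv v (shiftv v x) = x.
Proof. by rewrite /unshiftv /shiftv; case: ifP; case: ifP; lia. Qed.

Lemma shiftv_lt v x n : x < n -> v < n -> x != v -> shiftv v x < n.-1.
Proof. by rewrite /shiftv; case: ifP; lia. Qed.

Lemma shiftv_inj v x y : x != v -> y != v -> x != y -> shiftv v x != shiftv v y.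
Proof. by rewrite /shiftv; case: ifP; case: ifP; lia. Qed.

Lemma unordC a b : unord (a, b) = unord (b, a).
Proof. by rewrite /unord /= minnC maxnC. Qed.

Lemma unordP e x y : unord e = unord (x, y) -> e = (x, y) \/ e = (y, x).
Proof.
case: e => a b; rewrite /unord /= => -[h1 h2].
have : (a = x /\ b = y) \/ (a = y /\ b = x) by lia.
by case=> -[-> ->]; [left | right].
Qed.

Definition adj (G : graph) (x y : nat) : bool :=
  has (fun e => unord e == unord (x, y)) (gedges G).

Lemma adjP G x y :
  reflect (exists2 e, e \in gedges G & e = (x, y) \/ e = (y, x)) (adj G x y).
Proof.
apply: (iffP hasP) => -[e He Exy]; exists e => //; first exact/unordP/eqP.
by case: Exy => ->; rewrite ?eqxx // unordC eqxx.
Qed.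

Lemma adjC G x y : adj G x y = adj G y x.
Proof. by rewrite /adj unordC. Qed.

Lemma adj_vertices G x y : wf G -> adj G x y -> x < gnv G /\ y < gnv G.
Proof.
case/andP=> _ /allP Gok /adjP[e /Gok /and3P[e1 e2 _]].
by case=> Ee; rewrite Ee in e1 e2.
Qed.

Definition lipschitz (G : graph) (f : nat -> nat) : Prop :=
  forall x y, adj G x y -> f y <= (f x).+1.

Lemma lipschitz_edges G f :
  (forall e, e \in gedges G -> f e.2 <= (f e.1).+1 /\ f e.1 <= (f e.2).+1) ->
  lipschitz G f.
Proof. by move=> fe x y /adjP[e /fe fxy [] Ee]; rewrite Ee in fxy; case: fxy. Qed.

Lemma path_size G u v p : is_path G u v p -> pnv p <= gnv G.
Proof. by case=> _ [up [pv _]]; apply: uniq_size_bounded. Qed.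

Lemma path_adj G u v p i : is_path G u v p -> i < size p.2 ->
  adj G (nth 0 p.1 i) (nth 0 p.1 i.+1).
Proof.
case=> _ [_ [_ [pe [pedge _]]]] ip; apply/hasP.
exists (nth_edge G (nth 0 p.2 i)); last by rewrite pedge.
by rewrite mem_nth // (allP pe) // mem_nth.
Qed.

Lemma lipschitz_path G f u v p i j : lipschitz G f -> is_path G u v p ->
  i <= j <= size p.2 ->
  f (nth 0 p.1 j) <= f (nth 0 p.1 i) + (j - i) /\
  f (nth 0 p.1 i) <= f (nth 0 p.1 j) + (j - i).
Proof.
move=> fL pP /andP[]; elim: j => [|j IH] ij jL.
  by move: ij; rewrite leqn0 => /eqP ->; rewrite !addn0.
case: (eqVneq i j.+1) => [->|ij']; first by rewrite subnn !addn0.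
have step := path_adj pP jL.
have := fL _ _ step; have := fL _ _ (etrans (adjC _ _ _) step).
have ij1 : i <= j by lia.
have [] := IH ij1 (ltnW jL); lia.
Qed.

(** * Distances *)

Fixpoint ball (H : graph) (r j y : nat) : bool :=
  if j is j'.+1 then
    ball H r j' y ||
    has (fun e => (ball H r j' e.2 && (e.1 == y)) || (ball H r j' e.1 && (e.2 == y)))
        (gedges H)
  else y == r.

Lemma ball_adj H r j x y : adj H x y -> ball H r j x -> ball H r j.+1 y.
Proof.
move=> /adjP[e He Exy] rx /=; apply/orP; right; apply/hasP; exists e => //.
by case: Exy => -> /=; rewrite rx eqxx ?orbT.
Qed.

Lemma path_of_ball H r j y : wf H -> r < gnv H -> ball H r j y ->
  exists2 q, is_path H y r q & pnv q <= j.+1 /\ all (ball H r j) q.1.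
Proof.
move=> Hwf rH; elim: j y => [|j IH] y /=.
  move/eqP=> ->; exists ([:: r], [::]); last by rewrite /= eqxx.
  by rewrite /is_path /= rH.
case ry: (ball H r j y) => /=.
  move=> _; have [q qP [qs qb]] := IH y ry; exists q => //; split; first exact: leqW.
  by apply: sub_all qb => z zb; rewrite /= zb.
case/hasP=> e He ey.
have [w [rw Ewy]] : exists w, ball H r j w /\ (e = (y, w) \/ e = (w, y)).
  case: e He ey => e1 e2 He /= /orP[] /andP[rb /eqP Ey]; rewrite -Ey.
    by exists e2; split => //; left.
  by exists e1; split => //; right.
have wy : adj H w y by apply/adjP; exists e => //; case: Ewy; [right | left].
have yH := (adj_vertices Hwf wy).2.
have [[vs es] [sz [us [vsH [esH [edges [v0 vL]]]]]] [qs qb]] := IH w rw.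
rewrite /= in sz us vsH esH edges v0 qb qs.
exists (y :: vs, index e (gedges H) :: es).
  rewrite /is_path /= sz us andbT yH vsH index_mem He esH; do !split => //.
  - by apply/negP => /(allP qb); rewrite ry.
  - case=> [|i] /= iL; last exact: edges.
    by rewrite /nth_edge nth_index // v0; case: Ewy => ->; rewrite // unordC.
split; first by rewrite /pnv /= -ltnS.
apply/andP; split; first exact: ball_adj wy rw.
by apply: sub_all qb => z zb; rewrite /= zb.
Qed.

(* [dist H r y = gnv H] when [y] is not connected to [r]. *)
Definition dist (H : graph) (r y : nat) : nat :=
  find (fun j => ball H r j y) (iota 0 (gnv H)).

Lemma dist_min H r j y : ball H r j y -> dist H r y <= j.
Proof.
move=> rjy; rewrite /dist; case: (ltnP j (gnv H)) => jH.
  rewrite leqNgt; apply/negP => /(before_find 0).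
  by rewrite nth_iota // add0n rjy.
by apply: leq_trans (find_size _ _) _; rewrite size_iota.
Qed.

Lemma dist_ball H r y : dist H r y < gnv H -> ball H r (dist H r y) y.
Proof.
move=> dH; have has_ball : has (fun j => ball H r j y) (iota 0 (gnv H)).
  by rewrite has_find size_iota.
by have := nth_find 0 has_ball; rewrite nth_iota // add0n.
Qed.

Lemma dist_root H r : dist H r r = 0.
Proof. by apply/eqP; rewrite -leqn0; apply: (@dist_min _ _ 0); rewrite /= eqxx. Qed.

Lemma dist_lipschitz H r : lipschitz H (dist H r).
Proof.
move=> x y xy; case: (ltnP (dist H r x) (gnv H)) => dx.
  exact/dist_min/(ball_adj xy)/dist_ball.
apply: leq_trans (leq_trans dx (leqnSn _)).
by apply: leq_trans (find_size _ _) _; rewrite size_iota.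
Qed.

Lemma dist_path H r y : wf H -> r < gnv H -> dist H r y < gnv H ->
  exists2 q, is_path H y r q & pnv q <= (dist H r y).+1.
Proof.
move=> Hwf rH /dist_ball/(path_of_ball Hwf rH)[q qP [qs _]].
by exists q.
Qed.

Lemma dist_shortest_path H u r p : wf H -> is_path H u r p ->
    (forall q, is_path H u r q -> pnv p <= pnv q) ->
  forall i, i <= size p.2 -> dist H r (nth 0 p.1 i) = size p.2 - i.
Proof.
move=> Hwf pP p_min i iL; set L := size p.2.
have [sz [_ [pH [_ [_ [v0 vL]]]]]] := pP.
have rH : r < gnv H by rewrite -vL (allP pH) // mem_nth // sz.
have dL : dist H r (nth 0 p.1 L) = 0 by rewrite vL dist_root.
have dlip := @dist_lipschitz H r.
have [_ up] := lipschitz_path dlip pP (ltac:(lia) : i <= L <= L).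
have [_ low] := lipschitz_path dlip pP (ltac:(lia) : 0 <= i <= L).
have [_ up0] := lipschitz_path dlip pP (ltac:(lia) : 0 <= L <= L).
have pnvH := path_size pP.
have [q qP qs] : exists2 q, is_path H u r q & pnv q <= (dist H r u).+1.
  apply: dist_path => //; rewrite -v0; rewrite /pnv in pnvH; lia.
have := p_min q qP; rewrite /pnv in qs *; rewrite v0 in up0 low; lia.
Qed.

Lemma dist_shortest_path_inj H u r p : wf H -> is_path H u r p ->
    (forall q, is_path H u r q -> pnv p <= pnv q) ->
  {in p.1 &, injective (dist H r)}.
Proof.
move=> Hwf pP p_min x y xp yp.
have [sz _] := pP.
rewrite -(nth_index 0 xp) -(nth_index 0 yp).
have := index_mem x p.1; have := index_mem y p.1; rewrite xp yp sz !ltnS => iy ix.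
by rewrite !(dist_shortest_path Hwf pP p_min) // => /(congr1 (subn (size p.2)));
  rewrite !subKn // => ->.
Qed.

(** * Star models and the lower bound *)

Definition connected_set (G : graph) (C : pred nat) : Prop :=
  forall A : pred nat, (exists x, C x && A x) -> (exists y, C y && ~~ A y) ->
  exists x y, [&& C x, C y, A x, ~~ A y & adj G x y].

(* A minor model of K_{1,n}: the branch set [C] of the centre, and single vertices
   [N] as branch sets of the leaves. *)
Definition star_model (G : graph) (n : nat) : Prop :=
  exists2 C, connected_set G C & exists N : seq nat,
    [/\ uniq N, size N = n & forall y, y \in N -> ~~ C y /\ exists2 x, C x & adj G x y].

Lemma connected_set_vertices G C : wf G -> connected_set G C ->
  connected_set G [pred x | C x && (x < gnv G)].
Proof.
move=> Gwf Cc A [x /andP[/andP[Cx _] Ax]] [y /andP[/andP[Cy _] Ay]].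
have [x' [y' /and5P[Cx' Cy' Ax' Ay' xy]]] : exists x y, [&& C x, C y, A x, ~~ A y & adj G x y].
  by apply: Cc; [exists x | exists y]; apply/andP.
have [x'G y'G] := adj_vertices Gwf xy.
by exists x', y'; rewrite /= Cx' Cy' Ax' Ay' x'G y'G.
Qed.

Lemma connected_set_edge G x y : adj G x y -> connected_set G [pred w | (w == x) || (w == y)].
Proof.
move=> xy A [x' /andP[/orP Cx' Ax']] [y' /andP[/orP Cy' Ay']].
case Ax: (A x); case Ay: (A y).
- by case: Cy' Ay' => /eqP ->; rewrite ?Ax ?Ay.
- by exists x, y; rewrite /= !eqxx orbT Ax Ay xy.
- by exists y, x; rewrite /= !eqxx orbT Ax Ay adjC xy.
- by case: Cx' Ax' => /eqP ->; rewrite ?Ax ?Ay.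
Qed.

Lemma connected_set_level G C f x z t : connected_set G C -> lipschitz G f ->
  C x -> C z -> f x <= t <= f z -> exists2 c, C c & f c = t.
Proof.
move=> Cc fL Cx Cz /andP[xt tz].
case: (ltnP (f x) t) => [{}xt|tx]; last by exists x => //; apply/eqP; rewrite eqn_leq xt.
have [x' [z' /and5P[Cx' Cz' /= x't z't x'z']]] := Cc [pred w | f w < t]
  (ex_intro _ x (introT andP (conj Cx xt)))
  (ex_intro _ z (introT andP (conj Cz (negbT (leq_gtF tz))))).
by exists z' => //; have := fL _ _ x'z'; lia.
Qed.

Lemma level_off_path G C d (vs : seq nat) a b y :
  connected_set G C -> lipschitz G d -> {in vs &, injective d} ->
  (exists2 x, C x & adj G x a) -> (exists2 x, C x & adj G x b) ->
  d a < d y < d b -> y \in vs -> ~~ C y ->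
  exists2 c, C c & c \notin vs /\ d c = d y.
Proof.
move=> Cc dL d_inj [xa Cxa xaa] [xb Cxb xbb] /andP[ay yb] yvs Cy.
have [|c Cc' dc] := connected_set_level (t := d y) Cc dL Cxa Cxb.
  by have := dL _ _ xbb; have := dL _ _ (etrans (adjC _ _ _) xaa); lia.
exists c => //; split => //; apply/negP => cvs.
by move: Cy; rewrite -(d_inj _ _ cvs yvs dc) Cc'.
Qed.

Section ShortestPathNeighbours.

Variables (G : graph) (C : pred nat) (N : seq nat) (u r : nat) (p : seq nat * seq nat).
Hypotheses (Gwf : wf G) (Cc : connected_set G C) (CG : forall x, C x -> x < gnv G).
Hypotheses (uN : uniq N) (NC : forall y, y \in N -> ~~ C y /\ exists2 x, C x & adj G x y).
Hypotheses (pP : is_path G u r p) (p_min : forall q, is_path G u r q -> pnv p <= pnv q).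

Let d := dist G r.
Let NP : seq nat := [seq y <- N | y \in p.1].
Let NS : seq nat := [seq y <- N | y \notin p.1].
Let NPi : seq nat :=
  [seq y <- NP | has (fun a => d a < d y) NP && has (fun b => d y < d b) NP].

Let d_inj : {in p.1 &, injective d} := dist_shortest_path_inj Gwf pP p_min.

Let size_NPi : size NP <= size NPi + 2.
Proof.
rewrite [size NPi]size_filter; apply: count_interior; first by rewrite filter_uniq.
by move=> x y; rewrite !mem_filter => /andP[xp _] /andP[yp _]; apply: d_inj.
Qed.

Let level_witnesses : exists2 Cs, map d Cs = map d NPi &
  forall c, c \in Cs -> C c /\ c \notin p.1.
Proof.
apply: exists_seq_preimage => _ /mapP[y + ->]; rewrite !mem_filter.
move=> /andP[/andP[/hasP[a aNP ay] /hasP[b bNP yb]] /andP[yp yN]].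
move: aNP bNP; rewrite !mem_filter => /andP[_ /NC[_ aC]] /andP[_ /NC[_ bC]].
have [c Cc' [cp dc]] := level_off_path Cc (@dist_lipschitz G r) d_inj aC bC
  (introT andP (conj ay yb)) yp (NC yN).1.
by exists c.
Qed.

Lemma shortest_path_neighbours_bound : pnv p + size N <= gnv G + 2.
Proof.
have [Cs dCs CsP] := level_witnesses.
have [_ [up [pG _]]] := pP.
have uCs : uniq Cs.
  apply: (@map_uniq _ _ d); rewrite dCs map_inj_in_uniq ?filter_uniq // => x y.
  by rewrite !mem_filter => /andP[_ /andP[xp _]] /andP[_ /andP[yp _]]; apply: d_inj.
have uT : uniq (Cs ++ NS ++ p.1).
  rewrite cat_uniq uCs cat_uniq filter_uniq //= up andbT; apply/andP; split.
    apply/hasPn => x xT; apply/negP => /CsP[Cx xp'].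
    move: xT; rewrite mem_cat => /orP[|xp]; last by rewrite xp in xp'.
    by rewrite mem_filter => /andP[_ /NC[]]; rewrite Cx.
  by apply/hasPn => x xp; rewrite mem_filter xp.
have aT : all (fun x => x < gnv G) (Cs ++ NS ++ p.1).
  rewrite !all_cat pG andbT; apply/andP; split; apply/allP => x; first by move/CsP=> [/CG].
  by rewrite mem_filter => /andP[_ /NC[_ [z _ /(adj_vertices Gwf)[]]]].
have sN : size NP + size NS = size N by rewrite !size_filter; apply: count_predC.
have := uniq_size_bounded uT aT; rewrite !size_cat /pnv.
have -> : size Cs = size NPi by rewrite -(size_map d) dCs size_map.
by have := size_NPi; lia.
Qed.

End ShortestPathNeighbours.

Theorem shortest_path_star_model_bound G n u r p : wf G -> star_model G n -> is_path G u r p ->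
  (forall q, is_path G u r q -> pnv p <= pnv q) -> pnv p + n <= gnv G + 2.
Proof.
move=> Gwf [C Cc [N [uN <- NC]]] pP p_min.
apply: (shortest_path_neighbours_bound (C := [pred x | C x && (x < gnv G)])) pP p_min => //.
- exact: connected_set_vertices.
- by move=> x /andP[].
move=> y /NC [Cy [x Cx xy]]; split; first by rewrite /= (negbTE Cy).
by exists x => //; rewrite /= Cx (adj_vertices Gwf xy).1.
Qed.

(** * Minor operations preserve star models *)

Lemma connected_set_subgraph G G' C : {subset gedges G' <= gedges G} ->
  connected_set G' C -> connected_set G C.
Proof.
move=> sub Cc A xA yA; have [x [y /and5P[Cx Cy Ax Ay /hasP[e /sub eG exy]]]] := Cc A xA yA.
by exists x, y; rewrite Cx Cy Ax Ay; apply/hasP; exists e.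
Qed.

Lemma star_model_subgraph G G' n : {subset gedges G' <= gedges G} ->
  star_model G' n -> star_model G n.
Proof.
move=> sub [C Cc [N [uN sN NC]]]; exists C; first exact: connected_set_subgraph Cc.
exists N; split => // y /NC[Cy [x Cx /hasP[e /sub eG exy]]]; split => //.
by exists x => //; apply/hasP; exists e.
Qed.

Section Pullback.

Variables (G G' : graph) (phi : nat -> nat) (E0 : seq (nat * nat)).
Hypothesis G'E : gedges G' = [seq (phi e.1, phi e.2) | e <- E0].
Hypothesis E0G : {subset E0 <= gedges G}.

Lemma adj_pullback x' y' : adj G' x' y' ->
  exists a b, [/\ adj G a b, phi a = x', phi b = y' & (a, b) \in E0 \/ (b, a) \in E0].
Proof.
move=> /adjP[e']; rewrite G'E => /mapP[[a b] ab ->] /= Exy.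
have Gab : adj G a b by apply/adjP; exists (a, b); [exact: E0G | left].
case: Exy => -[<- <-]; first by exists a, b; split => //; left.
by exists b, a; split => //; [rewrite adjC | right].
Qed.

Lemma crossing_pullback (C' C : pred nat) (psi : nat -> nat) (A : pred nat) :
  connected_set G' C' ->
  (forall x, C x -> C' (phi x) /\ A (psi (phi x)) = A x) ->
  (forall e, e \in E0 -> (C' (phi e.1) -> C e.1) /\ (C' (phi e.2) -> C e.2)) ->
  (exists x, C x && A x) -> (exists y, C y && ~~ A y) ->
  exists x y, [&& C x, C y, A x, ~~ A y & adj G x y].
Proof.
move=> C'c CC' CE0 [x /andP[Cx Ax]] [y /andP[Cy Ay]].
have [C'x Ax'] := CC' x Cx; have [C'y Ay'] := CC' y Cy.
have [x' [y' /and5P[C'x' C'y' /= Ax'' Ay'' /adj_pullback[a [b [ab Ea Eb abE0]]]]]] :=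
  C'c [pred x' | A (psi x')]
    (ex_intro _ (phi x) (introT andP (conj C'x (etrans Ax' Ax))))
    (ex_intro _ (phi y) (introT andP (conj C'y (etrans (congr1 negb Ay') Ay)))).
subst x' y'.
have [Ca Cb] : C a /\ C b.
  by case: abE0 => /CE0 [] /= Ha Hb; split; [apply: Ha | apply: Hb | apply: Hb | apply: Ha].
by exists a, b; rewrite Ca Cb ab -(CC' a Ca).2 -(CC' b Cb).2 Ax'' Ay''.
Qed.

Lemma star_model_pullback (mkC : pred nat -> pred nat) n :
  (forall C', connected_set G' C' -> connected_set G (mkC C')) ->
  (forall C' e, e \in E0 -> mkC C' e.1 = C' (phi e.1) /\ mkC C' e.2 = C' (phi e.2)) ->
  star_model G' n -> star_model G n.
Proof.
move=> mkC_conn mkC_edge [C' C'c [N' [uN' sN' N'C']]].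
exists (mkC C'); first exact: mkC_conn.
have lift : forall y', y' \in N' -> exists2 y, phi y = y' &
    ~~ mkC C' y /\ exists2 x, mkC C' x & adj G x y.
  move=> y' /N'C'[C'y' [x' C'x' /adj_pullback[a [b [ab Ea Eb abE0]]]]].
  subst x' y'.
  have [Ca Cb] : mkC C' a = C' (phi a) /\ mkC C' b = C' (phi b).
    by case: abE0 => /(mkC_edge C') /= [] -> ->.
  exists b => //; split; first by rewrite Cb.
  by exists a; rewrite ?Ca.
have [N NE NC] := exists_seq_preimage lift.
exists N; split => //; first by apply: (@map_uniq _ _ phi); rewrite NE.
by rewrite -sN' -NE size_map.
Qed.

End Pullback.

Lemma del_isolated_star_model G v n :
  all (fun e : nat * nat => (e.1 != v) && (e.2 != v)) (gedges G) ->
  star_model (Graph (gnv G).-1 [seq (shiftv v e.1, shiftv v e.2) | e <- gedges G]) n ->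
  star_model G n.
Proof.
move=> v_isolated; set G' := Graph _ _.
have G'E : gedges G' = [seq (shiftv v e.1, shiftv v e.2) | e <- gedges G] by [].
have E0v : forall e, e \in gedges G -> (e.1 != v) && (e.2 != v) := allP v_isolated.
(* [shiftv v v = v], so [v] has to be excluded from the pulled back branch set. *)
apply: (star_model_pullback G'E (fun _ eG => eG)
          (mkC := fun C' x => (x != v) && C' (shiftv v x))).
  move=> C' C'c A; apply: (crossing_pullback G'E (fun _ eG => eG) (psi := unshiftv v) C'c).
    by move=> x /andP[xv C'x]; rewrite shiftvK.
  by move=> e /E0v /andP[-> ->].
by move=> C' e /E0v /andP[-> ->].
Qed.

Lemma del_edge_star_model G i n :
  star_model (Graph (gnv G) (rm_nth i (gedges G))) n -> star_model G n.
Proof. by apply: star_model_subgraph => e /mem_rm_nth. Qed.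

Lemma contract_star_model G i n : wf G -> i < size (gedges G) ->
  let u := (nth_edge G i).1 in let v := (nth_edge G i).2 in
  let ren := fun w => if w == v then u else w in
  star_model (Graph (gnv G).-1 [seq (shiftv v (ren e.1), shiftv v (ren e.2))
                               | e <- rm_nth i (gedges G)]) n ->
  star_model G n.
Proof.
move=> /andP[_ /allP Gok] iG u v ren; set G' := Graph _ _.
pose phi w := shiftv v (ren w).
have G'E : gedges G' = [seq (phi e.1, phi e.2) | e <- rm_nth i (gedges G)] by [].
have E0G : {subset rm_nth i (gedges G) <= gedges G} by move=> e /mem_rm_nth.
have uvE : (u, v) \in gedges G by rewrite /u /v -surjective_pairing mem_nth.
have uv : adj G u v by apply/adjP; exists (u, v); last left.
have u_neq_v : u != v by have /and3P[] := Gok _ uvE.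
have phi_uv : phi u = phi v by rewrite /phi /ren eqxx (negbTE u_neq_v).
apply: (star_model_pullback G'E E0G (mkC := fun C' x => C' (phi x))); last by [].
move=> C' C'c A xA yA.
(* Either the contracted edge crosses the cut [A], or [A] is constant on it and the cut
   descends to [G']. *)
case: (boolP (C' (phi u) && (A u != A v))) => [/andP[C'u Auv]|uv_same].
  have C'v : C' (phi v) by rewrite -phi_uv.
  case Au: (A u) Auv => /= Av.
    by exists u, v; rewrite /= C'u C'v Au Av uv.
  by exists v, u; rewrite /= C'u C'v Au adjC uv andbT; case: (A v) Av.
apply: (crossing_pullback G'E E0G (C := fun x => C' (phi x)) (psi := unshiftv v) C'c) => //.
move=> w C'w; split=> //; case: (eqVneq w v) => [Ew|wv]; last first.
  by rewrite /phi /ren (negbTE wv) shiftvK.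
rewrite Ew in C'w *; rewrite -phi_uv /phi /ren (negbTE u_neq_v) shiftvK //.
by apply/eqP; move: uv_same; rewrite phi_uv C'w negbK.
Qed.

Lemma step_wf G G' : minor_step G G' -> wf G -> wf G'.
Proof.
case=> {G G'} [G v vG G1 v_isolated|G i _|G i iG no_parallel u v ren] /andP[G0 /allP Gok].
- rewrite /wf /=; apply/andP; split; first lia.
  apply/allP => _ /mapP[e eG ->]; have /and3P[e1 e2 e12] := Gok e eG.
  have /andP[e1v e2v] := allP v_isolated e eG.
  by rewrite /edge_ok /= !shiftv_lt // shiftv_inj.
- by rewrite /wf /= G0; apply/allP => e /mem_rm_nth /Gok.
have uvE : nth (0, 0) (gedges G) i = (u, v) by rewrite /u /v /nth_edge; case: nth.
have /and3P[/= uG vG u_neq_v] : edge_ok (gnv G) (u, v) by rewrite -uvE Gok ?mem_nth.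
have ren_v w : ren w != v by rewrite /ren; case: (eqVneq w v).
have ren_lt w : w < gnv G -> ren w < gnv G by rewrite /ren; case: ifP.
rewrite /wf /=; apply/andP; split; first lia.
apply/allP => _ /mapP[e /(mem_rm_nthP (0, 0))[j jG [ji ->]] ->].
have := no_parallel j jG ji; rewrite /nth_edge uvE.
have /and3P := Gok _ (mem_nth (0, 0) jG).
case: (nth (0, 0) (gedges G) j) => a b /= [aG bG ab] not_uv.
rewrite /edge_ok /= !shiftv_lt ?ren_lt //=; apply: shiftv_inj => //.
rewrite /ren; case: (eqVneq a v) => [av|av]; case: (eqVneq b v) => [bv|bv] //.
- by rewrite av bv eqxx in ab.
- by apply: contraNneq not_uv => ub; rewrite av -ub unordC.
- by apply: contraNneq not_uv => ->; rewrite bv.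
Qed.

Lemma step_star_model G G' n : minor_step G G' -> wf G -> star_model G' n -> star_model G n.
Proof.
case=> {G G'} [G v _ _ v_isolated|G i _|G i iG _ u v ren] Gwf.
- exact: del_isolated_star_model.
- exact: del_edge_star_model.
- exact: contract_star_model.
Qed.

Lemma steps_star_model G G' n : steps G G' -> wf G ->
  (wf G' -> star_model G' n) -> star_model G n.
Proof.
elim=> {G G'} [G|G1 G2 G3 step _ IH] Gwf G'model; first exact: G'model.
exact/(step_star_model step Gwf)/IH/G'model/(step_wf step).
Qed.

Lemma iso_refl G : iso G G.
Proof. by split => //; exists id; do !split. Qed.

Lemma minor_refl G : minor G G.
Proof. by exists G; split; [left | apply: iso_refl]. Qed.

Lemma star_memP n e : reflect (exists2 j, j < n & e = (0, j.+1)) (e \in gedges (star n)).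
Proof.
apply: (iffP mapP) => -[j jn ->]; exists j => //; first by move: jn; rewrite mem_iota.
by rewrite mem_iota.
Qed.

Lemma size_star n : size (gedges (star n)) = n.
Proof. by rewrite size_map size_iota. Qed.

Lemma nth_star n i : i < n -> nth_edge (star n) i = (0, i.+1).
Proof. by move=> ni; rewrite /nth_edge (nth_map 0) ?size_iota // nth_iota. Qed.

Lemma wf_star n : wf (star n).
Proof. by apply/allP => e /star_memP[j jn ->]; rewrite /edge_ok /=; lia. Qed.

Lemma uniq_star n : uniq (gedges (star n)).
Proof. by rewrite map_inj_uniq ?iota_uniq // => a b []. Qed.

Lemma unord_star n : map unord (gedges (star n)) = gedges (star n).
Proof. by rewrite -map_comp; apply: eq_map => j; rewrite /unord /= min0n max0n. Qed.

(* The branch set is the preimage of the centre, the neighbours those of the leaves. *)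
Lemma iso_star_model H n : wf H -> iso H (star n) -> star_model H n.
Proof.
move=> Hwf [_ [f [_ [f_inj f_edges]]]].
pose C := [pred x | (x < gnv H) && (f x == 0)].
exists C.
  move=> A [x /andP[/andP[xH /eqP fx] Ax]] [y /andP[/andP[yH /eqP fy] Ay]].
  have exy : x = y by apply: f_inj; rewrite ?inE // fx fy.
  by rewrite -exy Ax in Ay.
have leaf : forall a, a \in map succn (iota 0 n) -> exists2 b, f b = a &
    ~~ C b /\ exists2 x, C x & adj H x b.
  move=> _ /mapP[j jn ->].
  have : (0, j.+1) \in [seq unord e | e <- gedges (star n)].
    by rewrite unord_star; apply/star_memP; exists j => //; rewrite mem_iota in jn.
  rewrite -(perm_mem f_edges) => /mapP[[a b] abH Eab].
  have ab : adj H a b by apply/adjP; exists (a, b); last left.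
  have [aH bH] := adj_vertices Hwf ab.
  have /unordP[] : unord (f a, f b) = unord (0, j.+1) by rewrite -Eab /unord /= min0n max0n.
    case=> fa fb; exists b => //; rewrite /= fb andbF; split => //.
    by exists a; rewrite /= ?aH ?fa.
  case=> fa fb; exists a => //; rewrite /= fa andbF; split => //.
  by exists b; rewrite /= ?bH ?fb // adjC.
have [N fN NC] := exists_seq_preimage leaf.
exists N; split => //; last by rewrite -(size_map f) fN size_map size_iota.
apply: (@map_uniq _ _ f); rewrite fN map_inj_uniq ?iota_uniq //; exact: succn_inj.
Qed.

Lemma minor_star_model H n : wf H -> minor (star n) H -> star_model H n.
Proof.
move=> Hwf [H' [HH' H'star]]; apply: steps_star_model HH' Hwf _ => H'wf.
exact: iso_star_model.
Qed.

Lemma star_model_star n : star_model (star n) n.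
Proof. exact: minor_star_model (wf_star n) (minor_refl _). Qed.

(** * Unique shortest paths and spectator numbers *)

Lemma path_edges_determined G u v u' v' p q : uniq (map unord (gedges G)) ->
  is_path G u v p -> is_path G u' v' q -> p.1 = q.1 -> p = q.
Proof.
case: p q => [vs es] [ws fs] G_simple [/= sp [_ [_ [esG [es_ok _]]]]]
  [/= sq [_ [_ [fsG [fs_ok _]]]]] /= Evw; subst ws.
rewrite /= in esG es_ok fsG fs_ok.
have sz : size es = size fs by apply/eq_add_S; rewrite -sp -sq.
congr pair; apply: (@eq_from_nth _ 0) => // j js.
have fjs : j < size fs by rewrite -sz.
have ejG : nth 0 es j < size (gedges G) by rewrite (allP esG) ?mem_nth.
have fjG : nth 0 fs j < size (gedges G) by rewrite (allP fsG) ?mem_nth.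
apply/eqP; rewrite -(nth_uniq (unord (0, 0)) _ _ G_simple) ?size_map //.
by rewrite !(nth_map (0, 0)) // -!/(nth_edge G _) (es_ok j js) (fs_ok j fjs).
Qed.

Lemma usp_of_potential G p (f : nat -> nat) : uniq (map unord (gedges G)) ->
  lipschitz G f -> is_path G (nth 0 p.1 0) (nth 0 p.1 (size p.2)) p ->
  f (nth 0 p.1 0) = 0 -> f (nth 0 p.1 (size p.2)) = size p.2 ->
  (forall w j, 0 < j < size p.2 -> f w = j -> w = nth 0 p.1 j) ->
  is_usp G p.
Proof.
set x := nth 0 p.1 0; set y := nth 0 p.1 _ => G_simple fL pP fx fy level.
have pq_size q : is_path G x y q -> size p.2 <= size q.2.
  move=> qP; have [_ [_ [_ [_ [_ [q0 qL]]]]]] := qP.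
  have [+ _] := lipschitz_path fL qP (ltac:(lia) : 0 <= size q.2 <= size q.2).
  by rewrite q0 qL fx fy subn0.
split => // q qP.
  by have [sp _] := pP; have [sq _] := qP; rewrite /pnv sp sq ltnS pq_size.
have [sp [_ [_ [_ [_ [p0 pL]]]]]] := pP; have [sq [_ [_ [_ [_ [q0 qL]]]]]] := qP.
rewrite /pnv sp sq => [[sz]]; apply/esym/(path_edges_determined G_simple pP qP).
apply: (@eq_from_nth _ 0); first by rewrite sp sq sz.
move=> j; rewrite sp ltnS => jL; case: (posnP j) => [->|j0]; first by rewrite p0 q0.
case: (ltngtP j (size p.2)) jL => // [jp _|->]; last by rewrite pL -sz qL.
have qj := lipschitz_path fL qP (ltac:(lia) : 0 <= j <= size q.2).
have qj' := lipschitz_path fL qP (ltac:(lia) : j <= size q.2 <= size q.2).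
apply/esym/level; first by rewrite j0.
by move: qj qj'; rewrite q0 qL fx fy sz; lia.
Qed.

Lemma usp_star_model_bound G n p : wf G -> star_model G n -> is_usp G p ->
  pnv p + n <= gnv G + 2.
Proof. by move=> Gwf Gmodel [pP p_min _]; apply: shortest_path_star_model_bound pP p_min. Qed.

Lemma sp_star_model_bound G n s : wf G -> star_model G n -> sp_is G s -> n - 2 <= s.
Proof.
move=> Gwf Gmodel [m [[[p [pU <-]] _] ->]].
by have := usp_star_model_bound Gwf Gmodel pU; have [/path_size] := pU; lia.
Qed.

Lemma sp_is_tight G n p : wf G -> star_model G n -> is_usp G p ->
  pnv p + n = gnv G + 2 -> sp_is G (n - 2).
Proof.
move=> Gwf Gmodel pU p_tight; exists (pnv p); split; last first.
  by have [/path_size] := pU; lia.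
split; first by exists p.
by move=> q /(usp_star_model_bound Gwf Gmodel); lia.
Qed.

Lemma usp_star n : 2 <= n -> is_usp (star n) ([:: 1; 0; 2], [:: 0; 1]).
Proof.
move=> n2; pose f w := if w == 1 then 0 else if w == 0 then 1 else 2.
apply: (usp_of_potential (f := f)) => //.
- by rewrite unord_star uniq_star.
- by apply: lipschitz_edges => e /star_memP[[|[|j]] _ ->].
- rewrite /is_path /= size_star; do !split => //; try lia.
  by case=> [|[|i]] //= _; rewrite nth_star //; lia.
- by move=> w [|[|j]] //= _; rewrite /f; case: eqP => // _; case: eqP.
Qed.

Lemma sp_star n : 2 <= n -> sp_is (star n) (n - 2).
Proof.
move=> n2; apply: sp_is_tight (wf_star n) (star_model_star n) (usp_star n2) _.
by rewrite /pnv /=; lia.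
Qed.

Lemma spfloor_star n : 2 <= n -> spfloor_is (star n) (n - 2).
Proof.
move=> n2; split.
  by exists (star n); split; [exact: wf_star | split; [exact: minor_refl | exact: sp_star]].
by move=> H s Hwf starH; apply: sp_star_model_bound Hwf (minor_star_model Hwf starH).
Qed.

(** * Proper minors of the star *)

Lemma star_step n H : 0 < n -> minor_step (star n) H ->
  H = star n.-1 \/ exists2 i, i < n & H = Graph n.+1 (rm_nth i (gedges (star n))).
Proof.
move=> n0; move ES: (star n) => S step; case: step ES => {S H}.
- move=> G v vG _ v_isolated EG; subst G; exfalso.
  have : (0, maxn v 1) \in gedges (star n).
    by apply/star_memP; exists (maxn v 1).-1; [move: vG => /=; lia | congr pair; lia].
  by move/(allP v_isolated) => /andP[/= /eqP v0 /eqP]; lia.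
- by move=> G i iG EG; subst G; right; exists i => //; rewrite size_star in iG.
move=> G i iG _ u v ren EG; subst G; left; rewrite size_star in iG.
have u0 : u = 0 by rewrite /u nth_star.
have vi : v = i.+1 by rewrite /v nth_star.
rewrite /star /=; congr Graph; first lia.
rewrite /rm_nth -map_take -map_drop take_iota drop_iota map_cat -!map_comp.
have -> : minn i n = i by lia.
have -> : iota 0 n.-1 = iota 0 i ++ iota i (n.-1 - i) by rewrite -iotaD; congr iota; lia.
rewrite add0n (_ : i.+1 = 1 + i) // iotaDl -map_comp (_ : n - (1 + i) = n.-1 - i); last lia.
rewrite map_cat; congr (_ ++ _); apply/eq_in_map => j; rewrite mem_iota => ji /=;
  rewrite /ren /shiftv u0 vi; repeat case: ifP; try lia; move=> *; congr pair; lia.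
Qed.

Lemma rm_nth_starP n i e : i < n -> reflect (exists2 c, e = (0, c) & 0 < c <= n /\ c != i.+1)
  (e \in rm_nth i (gedges (star n))).
Proof.
move=> iN; rewrite (rm_nth_mem (0, 0)) ?uniq_star ?size_star // -/(nth_edge _ _) nth_star //.
apply: (iffP andP) => [[/star_memP[j jn ->] ne]|[c -> [c0 ci]]].
  by exists j.+1.
split; last by apply: contraNneq ci => -[->].
by apply/star_memP; exists c.-1; [lia | congr pair; lia].
Qed.

Definition reattach (n i a : nat) : graph :=
  Graph n.+1 (rm_nth i (gedges (star n)) ++ [:: (a, i.+1)]).

Section Reattach.

Variables n i a : nat.
Hypotheses (iN : i < n) (aN : 0 < a <= n) (ai : a != i.+1).

Lemma wf_reattach : wf (reattach n i a).
Proof.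
apply/allP => e; rewrite mem_cat inE => /orP[/(rm_nth_starP _ iN)[c -> [c0 ci]]|/eqP ->].
  by rewrite /edge_ok /=; lia.
by rewrite /edge_ok /=; move: ai; lia.
Qed.

Lemma adj_reattach_centre c : 0 < c <= n -> c != i.+1 -> adj (reattach n i a) 0 c.
Proof.
move=> c0 ci; apply/adjP; exists (0, c); last by left.
by rewrite mem_cat; apply/orP; left; apply/(rm_nth_starP _ iN); exists c.
Qed.

Lemma adj_reattached : adj (reattach n i a) a i.+1.
Proof. by apply/adjP; exists (a, i.+1); [rewrite mem_cat mem_seq1 eqxx orbT | left]. Qed.

(* The branch set {0, a} sees every leaf except [a]. *)
Lemma star_model_reattach : star_model (reattach n i a) n.-1.
Proof.
exists [pred w | (w == 0) || (w == a)]; first exact/connected_set_edge/adj_reattach_centre.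
have u1n : uniq (iota 1 n) := iota_uniq 1 n.
exists (rem a (iota 1 n)); split; first exact: rem_uniq.
  have a1n : a \in iota 1 n by rewrite mem_iota; lia.
  by rewrite size_rem // size_iota.
move=> c; rewrite mem_rem_uniq // => /andP[/= ca]; rewrite mem_iota => c1n.
split; first by rewrite /= negb_or ca andbT; lia.
case: (eqVneq c i.+1) => [->|ci]; first by exists a; rewrite /= ?eqxx ?orbT ?adj_reattached.
by exists 0; rewrite /= ?eqxx ?adj_reattach_centre //; lia.
Qed.

Lemma usp_reattach b : 0 < b <= n -> b != i.+1 -> b != a ->
  exists2 p, is_usp (reattach n i a) p & pnv p = 4.
Proof.
move=> bN bi ba; set L := rm_nth i (gedges (star n)).
have uL : {in L, forall e, unord e = e}.
  by move=> e /(rm_nth_starP _ iN)[c -> _]; rewrite /unord /= min0n max0n.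
have L0 c : 0 < c <= n -> c != i.+1 -> (0, c) \in L.
  by move=> c0 ci; apply/(rm_nth_starP _ iN); exists c.
have nthL j : j < size L -> nth_edge (reattach n i a) j = nth (0, 0) L j.
  by move=> jL; rewrite /nth_edge /= nth_cat jL.
exists ([:: i.+1; a; 0; b], [:: size L; index (0, a) L; index (0, b) L]) => //.
pose f w := if w == i.+1 then 0 else if w == a then 1 else if w == 0 then 2 else 3.
apply: (usp_of_potential (f := f)).
- have uLL : map unord L = L by rewrite -[RHS]map_id; apply/eq_in_map.
  rewrite /= map_cat -/L uLL cat_uniq rm_nth_uniq ?uniq_star //= andbT orbF.
  by apply: contraTN isT => /(rm_nth_starP _ iN)[c [E _] _]; move: E; rewrite /unord /=; lia.
- apply: lipschitz_edges => e; rewrite mem_cat mem_seq1.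
  case/orP=> [/(rm_nth_starP _ iN)[c -> [c0 ci]]|/eqP ->]; rewrite /f /=.
    by move: ai ci; repeat case: eqP; lia.
  by move: ai; repeat case: eqP; lia.
- rewrite /is_path /=; do !split => //.
  + by move: ai ba bi; rewrite !inE; repeat case: eqP; lia.
  + by apply/and4P; split => //; lia.
  + by rewrite size_cat /= addn1 ltnSn !ltnS !index_size.
  + case=> [|[|[|j]]] //= _.
    * by rewrite /nth_edge /= nth_cat ltnn subnn /= unordC.
    * by rewrite nthL ?index_mem ?L0 // nth_index ?L0 // unordC.
    * by rewrite nthL ?index_mem ?L0 // nth_index ?L0.
- by rewrite /f eqxx.
- by rewrite /f /=; move: bi ba bN; repeat case: eqP; lia.
- by move=> w [|[|[|j]]] //= _; rewrite /f; move: ai; repeat case: eqP; lia.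
Qed.

Lemma sp_reattach b : 0 < b <= n -> b != i.+1 -> b != a -> sp_is (reattach n i a) (n - 3).
Proof.
move=> bN bi ba; have [p pU p4] := usp_reattach bN bi ba.
rewrite (_ : n - 3 = n.-1 - 2); last lia.
by apply: sp_is_tight wf_reattach star_model_reattach pU _; rewrite p4 /=; lia.
Qed.

End Reattach.

Lemma reattach_del_edge n i a :
  minor_step (reattach n i a) (Graph n.+1 (rm_nth i (gedges (star n)))).
Proof.
have := @DelEdge (reattach n i a) (size (rm_nth i (gedges (star n)))).
by rewrite /= rm_nth_size_cat size_cat addn1 ltnSn => /(_ isT).
Qed.

Lemma proper_minor_star_sp G n : 3 <= n -> proper_minor G (star n) ->
  exists2 H, wf H /\ minor G H & sp_is H (n - 3).
Proof.
move=> n3 [H1 [H' [step [H1H' H'G]]]].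
case: (star_step (ltac:(lia) : 0 < n) step) => [E|[i iN E]]; subst H1.
  exists (star n.-1); first by split; [exact: wf_star | exists H'].
  by rewrite (_ : n - 3 = n.-1 - 2); [apply: sp_star | ]; lia.
have [a [b [aN ai bN bi ba]]] : exists a b,
    [/\ 0 < a <= n, a != i.+1, 0 < b <= n, b != i.+1 & b != a].
  by clear -iN n3; case: i iN => [|[|i]] iN;
    [exists 2, 3 | exists 1, 3 | exists 1, 2]; split; lia.
exists (reattach n i a); last exact: sp_reattach bN bi ba.
split; first exact: wf_reattach.
by exists H'; split => //; apply: steps_cons (reattach_del_edge n i a) H1H'.
Qed.

Theorem corollary4p5 (k : nat) : 1 <= k ->
  spfloor_is (star (k + 2)) k /\
  (forall G, wf G -> proper_minor G (star (k + 2)) -> ~ spfloor_is G k).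
Proof.
move=> k1; split; first by rewrite -{2}(addnK 2 k); apply: spfloor_star; lia.
move=> G _ G_minor [_ G_floor].
have [H [Hwf GH] Hsp] := proper_minor_star_sp (ltac:(lia) : 3 <= k + 2) G_minor.
by have := G_floor H _ Hwf GH Hsp; lia.
Qed.
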